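(* For $m,l,r\in\mathbb{N}$ with $l,r\le m$, \[ [m-l]_q^![m-r]_q^!\,x^{-l}\Delta^{(-m)}(-t)y^{-r}=[l]_q^![r]_q^!\,t^{l+r-m}\,y^{l-m}\widetilde\Delta^{(-m)}(-t)x^{r-m} \] as formal Laurent series in $t$ with coefficients in $\mathbb{V}$.
   Context: $\mathbb{F}$ is a field of characteristic zero, $q\in\mathbb{F}$ nonzero and not a root of unity. $[n]_q=\frac{q^n-q^{-n}}{q-q^{-1}}$, $[n]_q^!=[n]_q[n-1]_q\cdots[1]_q$, $[0]_q^!=1$. $\mathbb{V}$ is the free algebra over $\mathbb{F}$ on letters $x,y$, with basis the words ($\mathbf 1$ the empty word); $t$ is an indeterminate. Put $\bar x=1,\bar y=-1$. A word $a_1\cdots a_n$ is Catalan if $\bar a_1+\dots+\bar a_i\ge0$ for $1\le i\le n-1$ and $\bar a_1+\dots+\bar a_n=0$; $\mathrm{Cat}_n$ is the set of Catalan words of length $2n$. For $m\in\mathbb{Z},n\in\mathbb{N}$, $\Delta^{(m)}_n=\sum_{a_1\cdots a_{2n}\in\mathrm{Cat}_n}\prod_{i=1}^{2n}[\bar a_1+\dots+\bar a_{i-1}+m(\bar a_i+1)/2]_q\,a_1\cdots a_{2n}$ and $\Delta^{(m)}(t)=\sum_{n\in\mathbb{N}}\Delta^{(m)}_nt^n$. $\widetilde\Delta^{(m)}_n$ is obtained from $\Delta^{(m)}_n$ by interchanging the letters $x$ and $y$ in every word, and $\widetilde\Delta^{(m)}(t)=\sum_n\widetilde\Delta^{(m)}_nt^n$.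 Deletion: for a word $w=a_1\cdots a_n$ ($n\ge1$), $x^{-1}w=a_2\cdots a_n$ if $a_1=x$ and $0$ otherwise; $x^{-1}\mathbf 1=0$; similarly $y^{-1}w$ deletes a leading $y$, and $wx^{-1}$, $wy^{-1}$ delete a trailing $x$, resp. $y$ (otherwise $0$). These are extended linearly and coefficientwise to series; for $k\ge1$, $x^{-k}$ (resp. $y^{-k}$, etc.) is the $k$-fold application, and exponent $0$ means the identity. *)

From mathcomp Require Import all_boot all_order all_algebra.
Set Implicit Arguments. Unset Strict Implicit. Unset Printing Implicit Defensive.
Import Order.TTheory GRing.Theory Num.Theory.
Local Open Scope ring_scope.

Section Defs.
Variable F : fieldType.

Definition letx : bool := true.
Definition lety : bool := false.
Definition word := seq bool.

(* An element of the free algebra V, given by its coefficient on each word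
   (the elements considered here are all finitely supported). *)
Definition V := word -> F.

Definition bar (a : bool) : int := if a then 1%Z else (-1)%Z.

Definition psum (w : word) (i : nat) : int := \sum_(j < i) bar (nth false w j).

Definition catalanb (w : word) : bool :=
  [forall i : 'I_(size w), (1 <= i)%N ==> (0 <= psum w i)%R] && (psum w (size w) == 0).

Definition qint (q : F) (n : int) : F := (q ^ n - q ^ (- n)) / (q - q^-1).
Definition qfact (q : F) (n : nat) : F := \prod_(1 <= i < n.+1) qint q i%:Z.

(* Delta^{(m)}_n as coefficient function; (\bar a_i + 1)/2 is 1 if a_i = x, 0 if a_i = y *)
Definition Delta (q : F) (m : int) (n : nat) : V := fun w =>
  if (size w == 2 * n)%N && catalanb w then
    \prod_(i < size w)
      qint q (psum w i + m * (((bar (nth false w i) + 1) %/ 2)%Z))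
  else 0.

Definition Deltat (q : F) (m : int) (n : nat) : V := fun w => Delta q m n (map negb w).

(* Deletions (linear): the coefficient of w in x^{-1} v is the coefficient of x w in v, etc. *)
Definition delL (a : bool) (v : V) : V := fun w => v (a :: w).
Definition delR (a : bool) (v : V) : V := fun w => v (rcons w a).
Definition delLk (a : bool) (k : nat) (v : V) : V := iter k (delL a) v.
Definition delRk (a : bool) (k : nat) (v : V) : V := iter k (delR a) v.

Definition pser := nat -> V.
Definition lser := int -> V.

Definition ser_negt (s : pser) : pser := fun n w => (-1) ^+ n * s n w.
Definition ser_map (g : V -> V) (s : pser) : pser := fun n => g (s n).
Definition lser_of (s : pser) : lser := fun N =>
  match N with Posz n => s n | Negz _ => fun _ => 0 end.
Definition lser_shift (k : int) (s : lser) : lser := fun N => s (N - k).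
Definition lser_scale (c : F) (s : lser) : lser := fun N w => c * s N w.

Definition DeltaS (q : F) (m : int) : pser := fun n => Delta q m n.
Definition DeltatS (q : F) (m : int) : pser := fun n => Deltat q m n.

End Defs.

From mathcomp Require Import all_boot all_order all_algebra.
From mathcomp Require Import zify ring.
From Stdlib Require Import FunctionalExtensionality.
Import Order.TTheory GRing.Theory Num.Theory.
Local Open Scope ring_scope.

(* Read a word as a lattice walk, x an up-step and y a down-step.  For m = -M the
   factor of an up-step from height h is [h - M] and that of a down-step is [h], so
   the weight of a Catalan word vanishes once its walk reaches height M + 1: only
   walks in the strip 0 <= h <= M contribute.  Deleting x^l and y^r leaves a walk from
   height l to height r, the deleted runs contributing (-1)^l [M]!/[M-l]! and [r]!.
   The reflection h |-> M - h, which swaps x and y, maps strip walks to strip walks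
   and multiplies the weight by (-1)^length; it carries the walks from M - l to M - r
   seen by the right-hand side onto those from l to r seen by the left-hand side. *)

Lemma signr_mod2 (R : pzRingType) (a b : nat) :
  a = b %[mod 2] -> (-1) ^+ a = (-1) ^+ b :> R.
Proof. by move=> eq_ab; rewrite -signr_odd -[RHS]signr_odd -!modn2 eq_ab. Qed.

Lemma bar_negb (a : bool) : bar (~~ a) = - bar a.
Proof. by case: a. Qed.

Definition drift (w : word) : int := \sum_(a <- w) bar a.

Lemma drift_cons a w : drift (a :: w) = bar a + drift w.
Proof. exact: big_cons. Qed.

Lemma drift_cat u v : drift (u ++ v) = drift u + drift v.
Proof. exact: big_cat. Qed.

Lemma drift_nseq k a : drift (nseq k a) = bar a *+ k.
Proof. by rewrite /drift big_nseq iter_addr_0. Qed.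

Lemma drift_ups k : drift (nseq k true) = k.
Proof. by rewrite drift_nseq natz. Qed.

Lemma drift_downs k : drift (nseq k false) = - k%:Z.
Proof. by rewrite drift_nseq (_ : bar false = - 1) // mulNrn natz. Qed.

Lemma drift_negb w : drift (map negb w) = - drift w.
Proof. by rewrite /drift big_map -sumrN; apply: eq_bigr => a _; rewrite bar_negb. Qed.

Lemma psum0 w : psum w 0 = 0.
Proof. by rewrite /psum big_ord0. Qed.

Lemma psumS a w i : psum (a :: w) i.+1 = bar a + psum w i.
Proof. by rewrite /psum big_ord_recl. Qed.

Lemma psum_size w : psum w (size w) = drift w.
Proof.
elim: w => [|a w IH]; first by rewrite psum0 /drift big_nil.
by rewrite /= psumS IH drift_cons.
Qed.

Fixpoint nonneg_walk (h : int) (w : word) : bool :=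
  if w is a :: w' then (0 <= h + bar a) && nonneg_walk (h + bar a) w' else true.

Lemma nonneg_walkE h w :
  nonneg_walk h w = all (fun i => 0 <= h + psum w i) (iota 1 (size w)).
Proof.
elim: w h => [|a w IH] h //=.
rewrite psumS psum0 addr0 (iotaDl 1 1) all_map IH; congr (_ && _).
by apply: eq_all => i /=; rewrite psumS addrA.
Qed.

Lemma catalanbE w : catalanb w = nonneg_walk 0 w && (drift w == 0).
Proof.
rewrite /catalanb nonneg_walkE -psum_size.
apply/andP/andP => -[nonneg_w end0]; split => //.
  apply/allP => i; rewrite mem_iota add0r => /andP[i_gt0 i_le].
  have [i_lt|i_ge] := ltnP i (size w).
    by move/forallP: nonneg_w => /(_ (Ordinal i_lt)) /implyP; apply.
  have -> : i = size w by apply/eqP; rewrite eqn_leq i_ge andbT -ltnS -add1n.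
  by rewrite (eqP end0).
apply/forallP => i; apply/implyP => i_gt0.
move/allP: nonneg_w => /(_ i); rewrite add0r; apply.
by rewrite mem_iota i_gt0 add1n ltnS (ltnW (ltn_ord i)).
Qed.

Section Weights.
Variables (F : fieldType) (q : F).

Lemma qint0 : qint q 0 = 0.
Proof. by rewrite /qint oppr0 subrr mul0r. Qed.

Lemma qintN (n : int) : qint q (- n) = - qint q n.
Proof. by rewrite /qint opprK -mulNr opprB. Qed.

Lemma qfactS n : qfact q n.+1 = qfact q n * qint q n.+1.
Proof. by rewrite /qfact big_nat_recr. Qed.

Definition step_weight (m h : int) (a : bool) : F :=
  if a then qint q (h + m) else qint q h.

Fixpoint weight (m h : int) (w : word) : F :=
  if w is a :: w' then step_weight m h a * weight m (h + bar a) w' else 1.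

Lemma step_weightE (m h : int) (a : bool) :
  qint q (h + m * ((bar a + 1) %/ 2)%Z) = step_weight m h a.
Proof. by case: a; rewrite /step_weight /= ?mulr1 ?mulr0 ?addr0. Qed.

Lemma prod_step_weight (m h : int) w :
  \prod_(i < size w) qint q (h + psum w i + m * ((bar (nth false w i) + 1) %/ 2)%Z)
  = weight m h w.
Proof.
elim: w h => [|a w IH] h /=; first by rewrite big_ord0.
rewrite big_ord_recl psum0 addr0 step_weightE -IH; congr (_ * _).
by apply: eq_bigr => i _; rewrite psumS addrA.
Qed.

Lemma DeltaE (m : int) n w : Delta q m n w =
  if [&& size w == (2 * n)%N, nonneg_walk 0 w & drift w == 0] then weight m 0 w else 0.
Proof.
rewrite /Delta catalanbE -(prod_step_weight m 0).
by under [in RHS]eq_bigr do rewrite add0r.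
Qed.

Section Strip.
Variable M : nat.

Fixpoint strip_weight (h : int) (w : word) : F :=
  if w is a :: w' then
    if 0 <= h + bar a <= M%:Z
    then step_weight (- M%:Z) h a * strip_weight (h + bar a) w' else 0
  else 1.

Lemma weight_strip h w : 0 <= h <= M%:Z ->
  (if nonneg_walk h w then weight (- M%:Z) h w else 0) = strip_weight h w.
Proof.
elim: w h => [|a w IH] h /andP[h_ge0 h_le] //=.
have [step_ge0 /=|_] := boolP (0 <= h + bar a); last by [].
have [step_le|step_gt] := boolP (h + bar a <= M%:Z).
  by rewrite -IH ?step_ge0 ?step_le //; case: ifP; rewrite ?mulr0.
have [-> ->] : a = true /\ h = M%:Z by move: step_ge0 step_gt; case: a => /=; lia.
by rewrite /step_weight subrr qint0 mul0r; case: ifP.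
Qed.

Lemma strip_weight_cat h u v :
  strip_weight h (u ++ v) = strip_weight h u * strip_weight (h + drift u) v.
Proof.
elim: u h => [|a u IH] h /=; first by rewrite /drift big_nil addr0 mul1r.
by case: ifP; rewrite ?mul0r // IH drift_cons addrA mulrA.
Qed.

Lemma strip_weight_reflect h w :
  strip_weight (M%:Z - h) (map negb w) = (-1) ^+ size w * strip_weight h w.
Proof.
elim: w h => [|a w IH] h /=; first by rewrite mulr1.
have -> : M%:Z - h + bar (~~ a) = M%:Z - (h + bar a) by rewrite bar_negb opprD addrA.
have -> : (0 <= M%:Z - (h + bar a) <= M%:Z) = (0 <= h + bar a <= M%:Z).
  by apply/andP/andP; lia.
case: ifP => _; rewrite ?mulr0 // IH exprS.
have -> : step_weight (- M%:Z) (M%:Z - h) (~~ a) = - step_weight (- M%:Z) h a.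
  by case: a; rewrite /step_weight /= -qintN; congr qint; lia.
ring.
Qed.

Lemma strip_weight_ups l : (l <= M)%N ->
  qfact q (M - l) * strip_weight 0 (nseq l true) = (-1) ^+ l * qfact q M.
Proof.
elim: l => [|l IH] l_le; first by rewrite subn0 mulr1 mul1r.
rewrite -[l.+1]addn1 nseqD strip_weight_cat drift_ups add0r /=.
rewrite ifT ?mulr1; last lia.
rewrite exprD expr1 mulrAC -IH 1?ltnW //.
have -> : (M - l = (M - (l + 1)).+1)%N by lia.
have -> : l%:Z - M%:Z = - (M - (l + 1)).+1%:Z by lia.
rewrite qfactS qintN; ring.
Qed.

Lemma strip_weight_downs k : (k <= M)%N -> strip_weight k (nseq k false) = qfact q k.
Proof.
elim: k => [|k IH] k_le /=; first by rewrite /qfact big_geq.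
have -> : k.+1%:Z + (-1)%Z = k by lia.
rewrite ifT; last lia.
by rewrite IH 1?ltnW // qfactS mulrC.
Qed.

Lemma Delta_strip n w : Delta q (- M%:Z) n w =
  if (size w == (2 * n)%N) && (drift w == 0) then strip_weight 0 w else 0.
Proof.
rewrite DeltaE -weight_strip ?lexx //.
by case: (size w == _); case: (nonneg_walk 0 w); case: (drift w == 0).
Qed.

Lemma Delta_sandwich p k r n w : (p + k = M)%N -> (r <= M)%N ->
  qfact q p * ((-1) ^+ n * Delta q (- M%:Z) n (nseq k true ++ w ++ nseq r false)) =
  if (k + size w + r == 2 * n)%N && (k%:Z + drift w == r%:Z)
  then (-1) ^+ (n + k) * qfact q M * strip_weight k w * qfact q r else 0.
Proof.
move=> pk r_le; rewrite Delta_strip !size_cat !size_nseq addnA.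
rewrite !drift_cat drift_ups drift_downs addrA subr_eq0.
case: ifP => [/andP[_ /eqP end_r]|_]; last by rewrite !mulr0.
rewrite !strip_weight_cat drift_ups add0r end_r strip_weight_downs //.
have -> : p = (M - k)%N by lia.
rewrite exprD -[(-1) ^+ n * _ * _]mulrA -strip_weight_ups; last by lia.
ring.
Qed.

Lemma Delta_sandwich_reflect l r n w : (l <= M)%N -> (r <= M)%N ->
  qfact q l * ((-1) ^+ n *
    Delta q (- M%:Z) n (nseq (M - l) true ++ map negb w ++ nseq (M - r) false)) =
  if (M - l + size w + (M - r) == 2 * n)%N && (l%:Z + drift w == r%:Z)
  then (-1) ^+ (n + (M - l) + size w) * qfact q M * strip_weight l w * qfact q (M - r)
  else 0.
Proof.
move=> l_le r_le; rewrite Delta_sandwich ?subnKC ?leq_subr // size_map drift_negb.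
have -> : ((M - l)%N%:Z - drift w == (M - r)%N%:Z) = (l%:Z + drift w == r%:Z).
  by apply/eqP/eqP; lia.
have -> : (M - l)%N%:Z = M%:Z - l%:Z by lia.
by rewrite strip_weight_reflect !exprD; case: ifP => // _; ring.
Qed.

End Strip.

End Weights.

Lemma delLkE (F : fieldType) (a : bool) k (v : V F) w : delLk a k v w = v (nseq k a ++ w).
Proof. by elim: k v => [|k IH] v //; rewrite /delLk iterSr -/(delLk a k _) IH. Qed.

Lemma delRkE (F : fieldType) (a : bool) k (v : V F) w : delRk a k v w = v (w ++ nseq k a).
Proof.
elim: k v w => [|k IH] v w; first by rewrite cats0.
by rewrite /delRk iterSr -/(delRk a k _) IH /delR -cats1 -catA -[k.+1]addn1 nseqD.
Qed.

Theorem lemma6p5 (F : fieldType) (q : F)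
  (hchar : [pchar F] =i pred0) (hq0 : q != 0)
  (hq : forall n : nat, (0 < n)%N -> q ^+ n != 1)
  (m l r : nat) (hl : (l <= m)%N) (hr : (r <= m)%N) :
  lser_scale (qfact q (m - l) * qfact q (m - r))
    (lser_of (ser_map (fun v => delLk letx l (delRk lety r v))
                      (ser_negt (DeltaS q (- (m%:Z)))))) =
  lser_scale (qfact q l * qfact q r)
    (lser_shift (l%:Z + r%:Z - m%:Z)
      (lser_of (ser_map (fun v => delLk lety (m - l) (delRk letx (m - r) v))
                        (ser_negt (DeltatS q (- (m%:Z))))))).
Proof.
apply: functional_extensionality => N; apply: functional_extensionality => w.
rewrite /lser_scale /lser_shift /lser_of /ser_map /ser_negt /DeltaS /DeltatS /Deltat.
case: N => [n|k]; case shift: (_ - _) => [n'|k'];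
  rewrite ?delLkE ?delRkE -?catA ?map_cat ?map_nseq ?mulr0 //= /letx /lety.
- rewrite mulrAC Delta_sandwich ?subnK // [RHS]mulrAC Delta_sandwich_reflect //.
  have -> : (m - l + size w + (m - r) == 2 * n')%N = (l + size w + r == 2 * n)%N.
    by apply/eqP/eqP; lia.
  case: ifP => [/andP[/eqP size_w _]|_]; last by rewrite !mul0r.
  rewrite (@signr_mod2 _ (n' + (m - l) + size w) (n + l)); last by lia.
  ring.
- rewrite mulrAC Delta_sandwich ?subnK //.
  have -> : (l + size w + r == 2 * n)%N = false by apply/eqP; move: shift; rewrite NegzE; lia.
  by rewrite mul0r.
- rewrite mulrAC Delta_sandwich_reflect //.
  have -> : (m - l + size w + (m - r) == 2 * n')%N = false.
    by apply/eqP; move: shift; rewrite NegzE; lia.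
  by rewrite mul0r.
Qed.
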